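(* Let $U\subseteq\mathbb{R}^4$ be open and let $f:U\to\mathbb{H}$ be a smooth diffeomorphism onto an open set that maps every line segment contained in $U$ onto an arc of a round circle or a line segment in $\mathbb{H}=\mathbb{R}^4$. Write $A_\alpha=\partial_\alpha f$ and suppose there is a smooth quaternion-valued 1-form $B$ on $U$ with $\partial_\alpha A_\alpha=B_\alpha A_\alpha$ for all constant vector fields $\alpha$. Let $C:U\to\mathbb{H}$ be the function such that $$\partial_\alpha B_\beta-\tfrac12 B_\alpha B_\beta=\tfrac13\,C\,\bigl(\overline{A_\alpha}A_\beta+\overline{A_\beta}A_\alpha+A_\alpha\overline{A_\beta}\bigr)$$ for all $\alpha,\beta$ (equivalently, $\partial_\alpha B_\alpha-\tfrac12B_\alpha^2=C|A_\alpha|^2$). Then $C$ is real-valued.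
   Context: $\mathbb{R}^4$ is identified with the quaternions $\mathbb{H}$; for a constant vector field $\alpha$, $\partial_\alpha$ is the directional derivative along $\alpha$; a quaternion-valued 1-form $B$ assigns to each point an $\mathbb{R}$-linear map $\alpha\mapsto B_\alpha\in\mathbb{H}$. Products are quaternion products, $\bar{\cdot}$ is conjugation, $|\cdot|$ the norm. *)

(* R : realType, R^4 = H represented as 'rV[R]_4,
   with coordinates (1, i, j, k) at indices 0,1,2,3. *)
From mathcomp Require Import all_boot all_order all_algebra.
From mathcomp Require Import all_classical all_reals all_analysis.
Import numFieldNormedType.Exports.
Import Order.TTheory GRing.Theory Num.Theory.
Set Implicit Arguments. Unset Strict Implicit. Unset Printing Implicit Defensive.
Local Open Scope ring_scope.
Local Open Scope classical_set_scope.

Section Quat.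
Variable R : realType.

Definition qc (p : 'rV[R]_4) (k : nat) : R := p ord0 (inord k).

Definition qmul (p q : 'rV[R]_4) : 'rV[R]_4 :=
  \row_(i < 4)
   [:: qc p 0 * qc q 0 - qc p 1 * qc q 1 - qc p 2 * qc q 2 - qc p 3 * qc q 3;
       qc p 0 * qc q 1 + qc p 1 * qc q 0 + qc p 2 * qc q 3 - qc p 3 * qc q 2;
       qc p 0 * qc q 2 - qc p 1 * qc q 3 + qc p 2 * qc q 0 + qc p 3 * qc q 1;
       qc p 0 * qc q 3 + qc p 1 * qc q 2 - qc p 2 * qc q 1 + qc p 3 * qc q 0]`_i.

Definition qconj (p : 'rV[R]_4) : 'rV[R]_4 :=
  \row_(i < 4) (if (i : nat) == 0%N then p ord0 i else - p ord0 i).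

Definition qofR (r : R) : 'rV[R]_4 :=
  \row_(i < 4) (if (i : nat) == 0%N then r else 0).

Definition iterD (vs : seq 'rV[R]_4) (f : 'rV[R]_4 -> 'rV[R]_4)
  : 'rV[R]_4 -> 'rV[R]_4 :=
  foldr (fun v g => 'D_v g) f vs.

Definition smooth_on (U : set 'rV[R]_4) (f : 'rV[R]_4 -> 'rV[R]_4) : Prop :=
  forall (vs : seq 'rV[R]_4) (x : 'rV[R]_4), U x -> differentiable (iterD vs f) x.

Definition diffeo_onto_open (U : set 'rV[R]_4) (f : 'rV[R]_4 -> 'rV[R]_4) : Prop :=
  smooth_on U f /\
  (forall x y, U x -> U y -> f x = f y -> x = y) /\
  open (f @` U) /\
  exists g : 'rV[R]_4 -> 'rV[R]_4,
    smooth_on (f @` U) g /\ (forall x, U x -> g (f x) = x).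

Definition segment (a b : 'rV[R]_4) : set 'rV[R]_4 :=
  [set a + t *: (b - a) | t in [set t : R | 0 <= t <= 1]].

Definition dot4 (u v : 'rV[R]_4) : R := (u *m v^T) ord0 ord0.

Definition circle_arc (S : set 'rV[R]_4) : Prop :=
  exists (c e1 e2 : 'rV[R]_4) (r t0 t1 : R),
    dot4 e1 e1 = 1 /\ dot4 e2 e2 = 1 /\ dot4 e1 e2 = 0 /\ 0 < r /\ t0 <= t1 /\
    S = [set c + (r * cos t) *: e1 + (r * sin t) *: e2
        | t in [set t : R | t0 <= t <= t1]].

Definition line_segment (S : set 'rV[R]_4) : Prop :=
  exists p q : 'rV[R]_4, S = segment p q.

End Quat.

From mathcomp Require Import all_boot all_order all_algebra.
From mathcomp Require Import all_classical all_reals all_analysis.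
From mathcomp Require Import ring lra.
Import numFieldNormedType.Exports.
Import Order.TTheory GRing.Theory Num.Theory.
Set Implicit Arguments. Unset Strict Implicit. Unset Printing Implicit Defensive.
Local Open Scope ring_scope.
Local Open Scope classical_set_scope.

(* Choose a direction al with A_al(x) = 1.  Along the curve t |-> f (x + t al) the
   hypotheses give f'' = B_al and f''' = d_al B_al + B_al^2 at x, so the identity
   defining C reads C(x) = f''' - 3/2 f''^2: C(x) is the Schwarzian derivative of a
   curve with unit velocity that runs along a line or a round circle.  On a line all
   derivatives are parallel to f' = 1, hence real.  On a circle of centre c, f', f''
   and f''' lie in the plane of the circle, and differentiating |f - c|^2 = r^2 three
   times gives (f - c).f' = 0, (f - c).f'' = -1 and (f - c).f''' = -3 f''.f'.
   Expanding f'' and f''' in the orthogonal basis (1, f - c) of that plane shows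
   that Im f''' = 3 Re(f'') Im(f''), which is the imaginary part of 3/2 f''^2. *)

Section QuaternionCoordinates.
Variable R : realType.
Implicit Types (u v w p q s : 'rV[R]_4) (a : R).

Lemma qc_ord u (i : 'I_4) : u ord0 i = qc u i.
Proof. by rewrite /qc inord_val. Qed.

Lemma quatP u v :
  qc u 0 = qc v 0 -> qc u 1 = qc v 1 -> qc u 2 = qc v 2 -> qc u 3 = qc v 3 -> u = v.
Proof.
move=> h0 h1 h2 h3; apply/rowP => i; rewrite !qc_ord.
by case: i => [[|[|[|[|?]]]] ?].
Qed.

Lemma qcD u v k : qc (u + v) k = qc u k + qc v k. Proof. by rewrite /qc mxE. Qed.
Lemma qcN u k : qc (- u) k = - qc u k. Proof. by rewrite /qc mxE. Qed.
Lemma qcB u v k : qc (u - v) k = qc u k - qc v k. Proof. by rewrite qcD qcN. Qed.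
Lemma qcZ a u k : qc (a *: u) k = a * qc u k. Proof. by rewrite /qc mxE. Qed.

Lemma qc_qmul0 p q : qc (qmul p q) 0 =
  qc p 0 * qc q 0 - qc p 1 * qc q 1 - qc p 2 * qc q 2 - qc p 3 * qc q 3.
Proof. by rewrite {1}/qc mxE inordK. Qed.
Lemma qc_qmul1 p q : qc (qmul p q) 1 =
  qc p 0 * qc q 1 + qc p 1 * qc q 0 + qc p 2 * qc q 3 - qc p 3 * qc q 2.
Proof. by rewrite {1}/qc mxE inordK. Qed.
Lemma qc_qmul2 p q : qc (qmul p q) 2 =
  qc p 0 * qc q 2 - qc p 1 * qc q 3 + qc p 2 * qc q 0 + qc p 3 * qc q 1.
Proof. by rewrite {1}/qc mxE inordK. Qed.
Lemma qc_qmul3 p q : qc (qmul p q) 3 =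
  qc p 0 * qc q 3 + qc p 1 * qc q 2 - qc p 2 * qc q 1 + qc p 3 * qc q 0.
Proof. by rewrite {1}/qc mxE inordK. Qed.

Definition qc_qmul := (qc_qmul0, qc_qmul1, qc_qmul2, qc_qmul3).

Lemma qc_qconj p :
  [/\ qc (qconj p) 0 = qc p 0, qc (qconj p) 1 = - qc p 1,
      qc (qconj p) 2 = - qc p 2 & qc (qconj p) 3 = - qc p 3].
Proof. by rewrite /qc !mxE !inordK. Qed.

Lemma qc_qofR a :
  [/\ qc (qofR a) 0 = a, qc (qofR a) 1 = 0, qc (qofR a) 2 = 0 & qc (qofR a) 3 = 0].
Proof. by rewrite /qc !mxE !inordK. Qed.

Lemma qmulr1 p : qmul p (qofR 1) = p.
Proof. by apply: quatP; rewrite !qc_qmul; have [-> -> -> ->] := qc_qofR 1; ring. Qed.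

Definition is_real_quat p := forall k, (0 < k < 4)%N -> qc p k = 0.

Lemma is_real_quat_qofR p : is_real_quat p -> exists r, p = qofR r.
Proof.
move=> pR; exists (qc p 0); have [r0 r1 r2 r3] := qc_qofR (qc p 0).
by apply: quatP; rewrite ?r0 ?r1 ?r2 ?r3 //; apply: pR.
Qed.

(* The Schwarzian derivative of a curve with unit velocity, in terms of its
   second and third derivatives [q] and [s]. *)
Definition schwarzian q s := s - (3 / 2) *: qmul q q.

(* the imaginary part of [q ^ 2] is [2 q_0 Im q] *)
Lemma qc_schwarzian q s k : (0 < k < 4)%N ->
  qc (schwarzian q s) k = qc s k - 3 * (qc q 0 * qc q k).
Proof.
rewrite /schwarzian qcB qcZ; case: k => [|[|[|[|k]]]] //= _; by rewrite !qc_qmul; field.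
Qed.

Lemma is_real_schwarzian q s :
  is_real_quat q -> is_real_quat s -> is_real_quat (schwarzian q s).
Proof. by move=> qR sR k k14; rewrite qc_schwarzian // (qR k) // (sR k) // !mulr0 subr0. Qed.

Lemma dot4E u v :
  dot4 u v = qc u 0 * qc v 0 + qc u 1 * qc v 1 + qc u 2 * qc v 2 + qc u 3 * qc v 3.
Proof. by rewrite /dot4 mxE !big_ord_recl big_ord0 !mxE !qc_ord addr0 !addrA. Qed.

Lemma dot4C u v : dot4 u v = dot4 v u.
Proof. by rewrite !dot4E; ring. Qed.

Lemma dot4Dl u v w : dot4 (u + v) w = dot4 u w + dot4 v w.
Proof. by rewrite !dot4E !qcD; ring. Qed.
Lemma dot4Zl a u w : dot4 (a *: u) w = a * dot4 u w.
Proof. by rewrite !dot4E !qcZ; ring. Qed.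
Lemma dot4Dr u v w : dot4 w (u + v) = dot4 w u + dot4 w v.
Proof. by rewrite !dot4E !qcD; ring. Qed.
Lemma dot4Br u v w : dot4 w (u - v) = dot4 w u - dot4 w v.
Proof. by rewrite !dot4E !qcB; ring. Qed.
Lemma dot4Zr a u w : dot4 w (a *: u) = a * dot4 w u.
Proof. by rewrite !dot4E !qcZ; ring. Qed.

Lemma dot4r0 u : dot4 u 0 = 0.
Proof. by rewrite -(scale0r (0 : 'rV[R]_4)) dot4Zr mul0r. Qed.

Definition qbasis (k : nat) : 'rV[R]_4 := \row_(i < 4) (i == k :> nat)%:R.

Lemma dot4_qbasis v k : (k < 4)%N -> dot4 v (qbasis k) = qc v k.
Proof.
move=> k4; rewrite dot4E /qc !mxE !inordK //.
by case: k k4 => [|[|[|[|k]]]] //= _; ring.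
Qed.

Lemma dot4_1l v : dot4 (qofR 1) v = qc v 0.
Proof. by rewrite dot4E; have [-> -> -> ->] := qc_qofR 1; ring. Qed.

End QuaternionCoordinates.

Section DirectionalDerivatives.
Variable R : realType.
Implicit Types (g h : 'rV[R]_4 -> 'rV[R]_4) (y v m : 'rV[R]_4).

Lemma derivable_qc g y v k : derivable g y v -> derivable (fun z => qc (g z) k) y v.
Proof. by move=> /derivable_mxP; apply. Qed.

Lemma derive_qc g y v k :
  derivable g y v -> 'D_v (fun z => qc (g z) k) y = qc ('D_v g y) k.
Proof. by move=> dg; rewrite (derive_mx dg) /qc mxE. Qed.

Lemma derivable_quat g y v :
  (forall k, (k < 4)%N -> derivable (fun z => qc (g z) k) y v) -> derivable g y v.
Proof.
move=> dg; apply/derivable_mxP => i j; rewrite (ord1 i).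
by have := dg j (ltn_ord j); rewrite /qc inord_val.
Qed.

Local Notation qcf g k := (fun z => qc (g z) k).

Lemma qcf_qmul g h :
  [/\ qcf (fun z => qmul (g z) (h z)) 0 =
        qcf g 0 * qcf h 0 - qcf g 1 * qcf h 1 - qcf g 2 * qcf h 2 - qcf g 3 * qcf h 3,
      qcf (fun z => qmul (g z) (h z)) 1 =
        qcf g 0 * qcf h 1 + qcf g 1 * qcf h 0 + qcf g 2 * qcf h 3 - qcf g 3 * qcf h 2,
      qcf (fun z => qmul (g z) (h z)) 2 =
        qcf g 0 * qcf h 2 - qcf g 1 * qcf h 3 + qcf g 2 * qcf h 0 + qcf g 3 * qcf h 1 &
      qcf (fun z => qmul (g z) (h z)) 3 =
        qcf g 0 * qcf h 3 + qcf g 1 * qcf h 2 - qcf g 2 * qcf h 1 + qcf g 3 * qcf h 0].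
Proof. by split; apply: funext => z; rewrite /= qc_qmul. Qed.

Ltac derivable_poly := lazymatch goal with
  | |- derivable (_ - _) _ _ => apply: derivableB; derivable_poly
  | |- derivable (_ + _) _ _ => apply: derivableD; derivable_poly
  | |- derivable (_ * _) _ _ => apply: derivableM; derivable_poly
  | |- derivable (fun z => qc _ _) _ _ => apply: derivable_qc; assumption
  end.

Lemma derivable_qmul g h y v : derivable g y v -> derivable h y v ->
  derivable (fun z => qmul (g z) (h z)) y v.
Proof.
move=> dg dh; have [E0 E1 E2 E3] := qcf_qmul g h.
by apply: derivable_quat => -[|[|[|[|k]]]] // _; rewrite ?E0 ?E1 ?E2 ?E3; derivable_poly.
Qed.

Lemma derive_qmul g h y v : derivable g y v -> derivable h y v ->
  'D_v (fun z => qmul (g z) (h z)) y = qmul ('D_v g y) (h y) + qmul (g y) ('D_v h y).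
Proof.
move=> dg dh; have [E0 E1 E2 E3] := qcf_qmul g h.
have dgh := derivable_qmul dg dh.
apply: quatP; rewrite qcD -derive_qc // ?E0 ?E1 ?E2 ?E3;
  rewrite !(deriveB, deriveD, deriveM); try derivable_poly;
  rewrite !derive_qc //; move: ('D_v g y) ('D_v h y) (g y) (h y) => a b c d;
  by rewrite !qc_qmul /GRing.scale /=; ring.
Qed.

Lemma qcf_dot4 g h : (fun z => dot4 (g z) (h z)) =
  qcf g 0 * qcf h 0 + qcf g 1 * qcf h 1 + qcf g 2 * qcf h 2 + qcf g 3 * qcf h 3.
Proof. by apply: funext => z; rewrite /= dot4E. Qed.

Lemma derivable_dot4 g h y v : derivable g y v -> derivable h y v ->
  derivable (fun z => dot4 (g z) (h z)) y v.
Proof. by move=> dg dh; rewrite qcf_dot4; derivable_poly. Qed.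

Lemma derive_dot4 g h y v : derivable g y v -> derivable h y v ->
  'D_v (fun z => dot4 (g z) (h z)) y = dot4 ('D_v g y) (h y) + dot4 (g y) ('D_v h y).
Proof.
move=> dg dh; rewrite qcf_dot4 !(deriveD, deriveM); try derivable_poly.
rewrite !derive_qc //; move: ('D_v g y) ('D_v h y) (g y) (h y) => a b c d.
by rewrite !dot4E /GRing.scale /=; ring.
Qed.

Lemma derivable_sub_cst g c y v :
  derivable g y v -> derivable (fun z => g z - c) y v.
Proof.
have dc : derivable (fun _ : 'rV[R]_4 => c) y v by apply: derivable_cst.
by move=> dg; exact: (derivableB dg dc).
Qed.

Lemma derive_sub_cst g c y v :
  derivable g y v -> 'D_v (fun z => g z - c) y = 'D_v g y.
Proof.
have dc : derivable (fun _ : 'rV[R]_4 => c) y v by apply: derivable_cst.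
by move=> dg; rewrite (deriveB dg dc) (derive_cst c) subr0.
Qed.

Lemma derive_dot4_cst g m y v :
  derivable g y v -> 'D_v (fun z => dot4 (g z) m) y = dot4 ('D_v g y) m.
Proof.
have dm : derivable (fun _ : 'rV[R]_4 => m) y v by apply: derivable_cst.
move=> dg; rewrite (derive_dot4 dg dm) (derive_cst m).
by rewrite dot4r0 addr0.
Qed.

End DirectionalDerivatives.

Section PlanarAlgebra.
Variable R : realType.
Implicit Types (u v w m d p q s : 'rV[R]_4).

(* [v] lies in the span of [u1] and [u2], stated dually *)
Definition in_span2 u1 u2 v :=
  forall m, dot4 u1 m = 0 -> dot4 u2 m = 0 -> dot4 v m = 0.

Lemma qc_qofR1 k : (0 < k < 4)%N -> qc (qofR (1 : R)) k = 0.
Proof. by have [_ ? ? ?] := qc_qofR (1 : R); case: k => [|[|[|[|k]]]]. Qed.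

Lemma in_span2_real w v :
  in_span2 w w (qofR 1) -> in_span2 w w v -> is_real_quat v.
Proof.
move=> one_w v_w k k14; have /andP[_ k4] := k14.
have w_real : qc w k = 0.
  (* [w_0 e_k - w_k e_0] is orthogonal to [w] and pairs with [1] to [- w_k] *)
  pose m := qc w 0 *: qbasis R k - qc w k *: qbasis R 0.
  have wm : dot4 w m = 0 by rewrite dot4Br !dot4Zr !dot4_qbasis //; ring.
  have := one_w m wm wm; rewrite dot4Br !dot4Zr !dot4_qbasis // qc_qofR1 //.
  by have [-> _ _ _] := qc_qofR (1 : R); lra.
have wk : dot4 w (qbasis R k) = 0 by rewrite dot4_qbasis.
by rewrite -dot4_qbasis //; apply: v_w.
Qed.

Lemma orth_expand2 (ap bp ad bd av bv : R) :
  ap ^+ 2 + bp ^+ 2 = 1 -> ap * ad + bp * bd = 0 ->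
  (ad ^+ 2 + bd ^+ 2) * av
  = (ad ^+ 2 + bd ^+ 2) * (av * ap + bv * bp) * ap + (av * ad + bv * bd) * ad.
Proof.
move=> p1 pd; apply/eqP; rewrite -subr_eq0; apply/eqP.
(* the difference is an explicit combination of the two hypotheses *)
transitivity (av * ((bp * bd - ap * ad) * (ap * ad + bp * bd) - bd ^+ 2 * (ap ^+ 2 + bp ^+ 2 - 1))
  - bv * ((bp * ad + ap * bd) * (ap * ad + bp * bd) - ad * bd * (ap ^+ 2 + bp ^+ 2 - 1))).
  by ring.
by rewrite pd p1 subrr; ring.
Qed.

Section Plane.
Variables e1 e2 : 'rV[R]_4.
Hypotheses (e11 : dot4 e1 e1 = 1) (e22 : dot4 e2 e2 = 1) (e12 : dot4 e1 e2 = 0).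

Lemma in_span2_comb a b : in_span2 e1 e2 (a *: e1 + b *: e2).
Proof. by move=> m e1m e2m; rewrite dot4Dl !dot4Zl e1m e2m !mulr0 addr0. Qed.

Lemma dot4_comb a b : dot4 (a *: e1 + b *: e2) (a *: e1 + b *: e2) = a ^+ 2 + b ^+ 2.
Proof.
have e21 : dot4 e2 e1 = 0 by rewrite dot4C.
by rewrite !dot4Dl !dot4Zl !dot4Dr !dot4Zr e11 e22 e12 e21; ring.
Qed.

Lemma in_span2_expand v : in_span2 e1 e2 v -> v = dot4 v e1 *: e1 + dot4 v e2 *: e2.
Proof.
move=> v12; have e21 : dot4 e2 e1 = 0 by rewrite dot4C.
have qcv k : (k < 4)%N -> qc v k = dot4 v e1 * qc e1 k + dot4 v e2 * qc e2 k.
  move=> k4; pose m := qbasis R k - dot4 (qbasis R k) e1 *: e1 - dot4 (qbasis R k) e2 *: e2.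
  have m1 : dot4 e1 m = 0.
    by rewrite !dot4Br !dot4Zr e11 e12 (dot4C e1) mulr1 mulr0 subrr subr0.
  have m2 : dot4 e2 m = 0.
    by rewrite !dot4Br !dot4Zr e22 e21 (dot4C e2) mulr1 mulr0 subr0 subrr.
  have := v12 m m1 m2; rewrite !dot4Br !dot4Zr !dot4_qbasis //.
  by rewrite !(dot4C (qbasis R k)) !dot4_qbasis //; lra.
by apply: quatP; rewrite qcD !qcZ qcv.
Qed.

Lemma dot4_in_span2 u v : in_span2 e1 e2 u -> in_span2 e1 e2 v ->
  dot4 u v = dot4 u e1 * dot4 v e1 + dot4 u e2 * dot4 v e2.
Proof.
move=> /in_span2_expand Eu /in_span2_expand Ev; have e21 : dot4 e2 e1 = 0 by rewrite dot4C.
rewrite {1}Eu {1}Ev !dot4Dl !dot4Zl !dot4Dr !dot4Zr e11 e22 e12 e21; ring.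
Qed.

Lemma qc_in_span2 v k : in_span2 e1 e2 v ->
  qc v k = dot4 v e1 * qc e1 k + dot4 v e2 * qc e2 k.
Proof. by move=> /in_span2_expand {1}->; rewrite qcD !qcZ. Qed.

Lemma qc_orth_expand p d v k :
  in_span2 e1 e2 p -> in_span2 e1 e2 d -> in_span2 e1 e2 v ->
  dot4 p p = 1 -> dot4 p d = 0 ->
  dot4 d d * qc v k = dot4 d d * dot4 v p * qc p k + dot4 v d * qc d k.
Proof.
move=> p12 d12 v12.
rewrite (dot4_in_span2 p12 p12) (dot4_in_span2 p12 d12) (dot4_in_span2 d12 d12).
rewrite (dot4_in_span2 v12 p12) (dot4_in_span2 v12 d12) -!expr2 => p1 pd.
rewrite (qc_in_span2 k v12) (qc_in_span2 k p12) (qc_in_span2 k d12).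
have Ea := orth_expand2 (dot4 v e1) (dot4 v e2) p1 pd.
have Eb := orth_expand2 (dot4 v e2) (dot4 v e1)
  (etrans (addrC _ _) p1) (etrans (addrC _ _) pd).
transitivity (qc e1 k * ((dot4 d e1 ^+ 2 + dot4 d e2 ^+ 2) * dot4 v e1)
  + qc e2 k * ((dot4 d e2 ^+ 2 + dot4 d e1 ^+ 2) * dot4 v e2)); first by ring.
by rewrite Ea Eb; ring.
Qed.
Lemma plane_jet_real d q s :
  in_span2 e1 e2 d -> in_span2 e1 e2 (qofR 1) -> in_span2 e1 e2 q -> in_span2 e1 e2 s ->
  dot4 d d != 0 -> dot4 (qofR 1) d = 0 ->
  dot4 q d + dot4 (qofR 1) (qofR 1) = 0 -> dot4 s d + 3 * dot4 q (qofR 1) = 0 ->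
  is_real_quat (schwarzian q s).
Proof.
move=> d12 one12 q12 s12 dd_neq0 one_d q_d s_d k k14; rewrite qc_schwarzian //.
have one_one : dot4 (qofR 1) (qofR (1 : R)) = 1.
  by rewrite dot4_1l; have [-> _ _ _] := qc_qofR (1 : R).
have q_one : dot4 q (qofR 1) = qc q 0 by rewrite dot4C dot4_1l.
have Eq := qc_orth_expand k one12 d12 q12 one_one one_d.
have Es := qc_orth_expand k one12 d12 s12 one_one one_d.
rewrite qc_qofR1 // mulr0 add0r in Eq Es.
apply/eqP; rewrite -(mulrI_eq0 _ (lregP dd_neq0)); apply/eqP.
transitivity (dot4 d d * qc s k - 3 * qc q 0 * (dot4 d d * qc q k)); first by ring.
rewrite Eq Es; have -> : dot4 q d = -1 by lra.
have -> : dot4 s d = - 3 * qc q 0 by rewrite -q_one; lra.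
by ring.
Qed.
End Plane.
End PlanarAlgebra.

Section AlongLine.
Variables (R : realType) (x al : 'rV[R]_4) (e : R).
Hypothesis e_gt0 : 0 < e.

Definition on_line (P : 'rV[R]_4 -> Prop) := forall t, `|t| < e -> P (x + t *: al).

Lemma on_line_at P : on_line P -> P x.
Proof. by move=> /(_ 0); rewrite normr0 scale0r addr0; apply. Qed.

Lemma on_line_derive_cst (h k : 'rV[R]_4 -> R) kap :
  on_line (fun y => h y = kap) -> on_line (fun y => 'D_al h y = k y) ->
  on_line (fun y => k y = 0).
Proof.
move=> h_cst hk t lt_te; rewrite -hk //.
have near_t : \forall s \near 0^', `|t + s| < e.
  have lt0 : 0 < e - `|t| by rewrite subr_gt0.
  apply: filterS (dnbhs0_lt lt0) => s lts.
  by rewrite (le_lt_trans (ler_normD _ _)) // -ltrBrDl.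
rewrite /derive; apply: lim_near_cst; first exact: norm_hausdorff.
apply: filterS near_t => s lts /=.
have -> : s *: al + (x + t *: al) = x + (t + s) *: al.
  by rewrite scalerDl addrCA (addrC (s *: al)).
by rewrite h_cst // h_cst // subrr scaler0.
Qed.

Variable f : 'rV[R]_4 -> 'rV[R]_4.
Hypothesis f_derivable : on_line (fun y =>
  [/\ derivable f y al, derivable ('D_al f) y al & derivable ('D_al ('D_al f)) y al]).

Lemma jet_orthogonal m kap : on_line (fun y => dot4 (f y) m = kap) ->
  [/\ dot4 ('D_al f x) m = 0, dot4 ('D_al ('D_al f) x) m = 0
    & dot4 ('D_al ('D_al ('D_al f)) x) m = 0].
Proof.
move=> fm.
have Z1 : on_line (fun y => dot4 ('D_al f y) m = 0).
  by apply: on_line_derive_cst fm _ => t /f_derivable[df _ _]; rewrite (derive_dot4_cst m df).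
have Z2 : on_line (fun y => dot4 ('D_al ('D_al f) y) m = 0).
  by apply: on_line_derive_cst Z1 _ => t /f_derivable[_ df _]; rewrite (derive_dot4_cst m df).
have Z3 : on_line (fun y => dot4 ('D_al ('D_al ('D_al f)) y) m = 0).
  by apply: on_line_derive_cst Z2 _ => t /f_derivable[_ _ df]; rewrite (derive_dot4_cst m df).
by split; [exact: on_line_at Z1 | exact: on_line_at Z2 | exact: on_line_at Z3].
Qed.

Lemma jet_sphere c r2 : on_line (fun y => dot4 (f y - c) (f y - c) = r2) ->
  [/\ dot4 ('D_al f x) (f x - c) = 0,
      dot4 ('D_al ('D_al f) x) (f x - c) + dot4 ('D_al f x) ('D_al f x) = 0
    & dot4 ('D_al ('D_al ('D_al f)) x) (f x - c)
      + 3 * dot4 ('D_al ('D_al f) x) ('D_al f x) = 0].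
Proof.
move=> f_sph.
pose f1 := 'D_al f; pose f2 := 'D_al f1; pose f3 := 'D_al f2.
pose dot4f (g h : 'rV[R]_4 -> 'rV[R]_4) : 'rV[R]_4 -> R := fun y => dot4 (g y) (h y).
pose d : 'rV[R]_4 -> 'rV[R]_4 := fun y => f y - c.
pose k1 := dot4f f1 d + dot4f d f1.
pose k2 := dot4f f2 d + dot4f f1 f1 + (dot4f f1 f1 + dot4f d f2).
pose k3 := dot4f f3 d + dot4f f2 f1 + (dot4f f2 f1 + dot4f f1 f2)
           + (dot4f f2 f1 + dot4f f1 f2 + (dot4f f1 f2 + dot4f d f3)).
have Z1 : on_line (fun y => k1 y = 0).
  apply: on_line_derive_cst f_sph _ => t /f_derivable[df _ _].
  have dd := derivable_sub_cst (c := c) df.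
  by rewrite (derive_dot4 dd dd) (derive_sub_cst c df).
have Z2 : on_line (fun y => k2 y = 0).
  apply: on_line_derive_cst Z1 _ => t /f_derivable[df df1 _].
  have dd := derivable_sub_cst (c := c) df.
  rewrite /k1 /dot4f /d (deriveD (derivable_dot4 df1 dd) (derivable_dot4 dd df1)).
  by rewrite (derive_dot4 df1 dd) (derive_dot4 dd df1) (derive_sub_cst c df).
have Z3 : on_line (fun y => k3 y = 0).
  apply: on_line_derive_cst Z2 _ => t /f_derivable[df df1 df2].
  have dd := derivable_sub_cst (c := c) df.
  have d2d := derivable_dot4 df2 dd; have d11 := derivable_dot4 df1 df1.
  have dd2 := derivable_dot4 dd df2.
  rewrite /k2 /dot4f /d (deriveD (derivableD d2d d11) (derivableD d11 dd2)).
  rewrite (deriveD d2d d11) (deriveD d11 dd2) (derive_dot4 df2 dd) (derive_dot4 df1 df1).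
  by rewrite (derive_dot4 dd df2) (derive_sub_cst c df).
suff : [/\ dot4 (f1 x) (f x - c) = 0,
  dot4 (f2 x) (f x - c) + dot4 (f1 x) (f1 x) = 0
  & dot4 (f3 x) (f x - c) + 3 * dot4 (f2 x) (f1 x) = 0] by [].
have h1 : dot4 (f1 x) (f x - c) + dot4 (f x - c) (f1 x) = 0 := on_line_at Z1.
have h2 : dot4 (f2 x) (f x - c) + dot4 (f1 x) (f1 x)
          + (dot4 (f1 x) (f1 x) + dot4 (f x - c) (f2 x)) = 0 := on_line_at Z2.
have h3 : dot4 (f3 x) (f x - c) + dot4 (f2 x) (f1 x)
          + (dot4 (f2 x) (f1 x) + dot4 (f1 x) (f2 x))
          + (dot4 (f2 x) (f1 x) + dot4 (f1 x) (f2 x)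
          + (dot4 (f1 x) (f2 x) + dot4 (f x - c) (f3 x))) = 0 := on_line_at Z3.
(* generalizing first keeps the rewrites from unfolding the derivatives *)
move: h1 h2 h3; move: (f x - c) (f1 x) (f2 x) (f3 x) => d0 p q s.
by rewrite !(dot4C d0) (dot4C p q) => h1 h2 h3; split; lra.
Qed.

Lemma jet_in_span2 c u1 u2 :
  on_line (fun y => exists a b, f y = c + a *: u1 + b *: u2) ->
  [/\ in_span2 u1 u2 ('D_al f x), in_span2 u1 u2 ('D_al ('D_al f) x)
    & in_span2 u1 u2 ('D_al ('D_al ('D_al f)) x)].
Proof.
move=> f_plane.
have orth m : dot4 u1 m = 0 -> dot4 u2 m = 0 ->
    [/\ dot4 ('D_al f x) m = 0, dot4 ('D_al ('D_al f) x) m = 0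
      & dot4 ('D_al ('D_al ('D_al f)) x) m = 0].
  move=> u1m u2m; apply: (jet_orthogonal (kap := dot4 c m)) => t.
  by move=> /f_plane[a [b ->]]; rewrite !dot4Dl !dot4Zl u1m u2m !mulr0 !addr0.
by split=> m u1m u2m; have [] := orth m u1m u2m.
Qed.

Hypothesis f_unit : 'D_al f x = qofR 1.

Lemma line_jet_real p w : on_line (fun y => exists tau, f y = p + tau *: w) ->
  is_real_quat (schwarzian ('D_al ('D_al f) x) ('D_al ('D_al ('D_al f)) x)).
Proof.
move=> f_line; have [] := jet_in_span2 (c := p) (u1 := w) (u2 := w) _.
  by move=> t /f_line[tau ->]; exists tau, 0; rewrite scale0r addr0.
rewrite f_unit => one_w q_w s_w.
by apply: is_real_schwarzian; apply: in_span2_real one_w _.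
Qed.

Lemma circle_jet_real c e1 e2 r :
  dot4 e1 e1 = 1 -> dot4 e2 e2 = 1 -> dot4 e1 e2 = 0 -> 0 < r ->
  on_line (fun y => exists th, f y = c + (r * cos th) *: e1 + (r * sin th) *: e2) ->
  is_real_quat (schwarzian ('D_al ('D_al f) x) ('D_al ('D_al ('D_al f)) x)).
Proof.
move=> e11 e22 e12 r_gt0 f_circ.
have subc u v : c + u + v - c = u + v by rewrite [c + u]addrC addrAC addrK.
have f_plane : on_line (fun y => exists a b, f y = c + a *: e1 + b *: e2).
  by move=> t /f_circ[th ->]; exists (r * cos th), (r * sin th).
have f_sph : on_line (fun y => dot4 (f y - c) (f y - c) = r ^+ 2).
  move=> t /f_circ[th ->]; rewrite subc dot4_comb //.
  by rewrite !exprMn -mulrDr cos2Dsin2 mulr1.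
have [a [b fx]] := on_line_at f_plane.
have d12 : in_span2 e1 e2 (f x - c) by rewrite fx subc; apply: in_span2_comb.
have dd_neq0 : dot4 (f x - c) (f x - c) != 0.
  by rewrite (on_line_at f_sph) expf_neq0 // gt_eqF.
have [] := jet_in_span2 f_plane; have [] := jet_sphere f_sph.
rewrite f_unit => h1 h2 h3 one12 q12 s12.
by have := plane_jet_real e11 e22 e12 d12 one12 q12 s12 dd_neq0 h1 h2 h3.
Qed.

End AlongLine.

Lemma exists_unit_direction (R : realType) (U : set 'rV[R]_4) (f : 'rV[R]_4 -> 'rV[R]_4) x :
  diffeo_onto_open U f -> U x -> exists al, 'D_al f x = qofR 1.
Proof.
move=> [f_smooth [_ [fU_open [g [g_smooth gK]]]]] Ux.
have fU_fx : (f @` U) (f x) by exists x.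
have dg : differentiable g (f x) := g_smooth [::] _ fU_fx.
have df : differentiable f (g (f x)) by rewrite gK //; exact: f_smooth [::] _ Ux.
exists ('d g (f x) (qofR 1)).
(* [f \o g] is the identity near [f x]; apply the chain rule to it *)
rewrite deriveE; last exact: f_smooth [::] _ Ux.
move: (diff_comp dg df) => /(congr1 (fun F => F (qofR 1))) /=; rewrite gK // => <-.
rewrite -deriveE; last exact: differentiable_comp.
rewrite (@near_eq_derive _ _ _ _ id); first exact: derive_id.
apply: filterS (open_nbhs_nbhs (conj fU_open fU_fx)) => _ [y Uy <-] /=.
by rewrite gK.
Qed.

Lemma segment_around (R : realType) (U : set 'rV[R]_4) x al :
  open U -> U x ->
  exists2 eps : R, 0 < eps & exists a b, segment a b `<=` U /\ on_line x al eps (segment a b).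
Proof.
move=> U_open Ux.
have [r /= r_gt0 rU] := (nbhs_normP x U).1 (open_nbhs_nbhs (conj U_open Ux)).
have al1_gt0 : 0 < `|al| + 1 by have := normr_ge0 al; lra.
pose eps := r / (`|al| + 1).
have eps_gt0 : 0 < eps by rewrite divr_gt0.
have lineU t : `|t| <= eps -> U (x + t *: al).
  move=> t_le; apply: rU => /=; rewrite opprD addrA subrr add0r normrN normrZ.
  apply: (le_lt_trans (ler_wpM2r (normr_ge0 al) t_le)).
  by rewrite /eps mulrAC ltr_pdivrMr // mulrDr mulr1 ltrDl.
exists eps => //; exists (x - eps *: al), (x + eps *: al); split.
- move=> _ [tau /andP[tau0 tau1] <-].
  have -> : x - eps *: al + tau *: (x + eps *: al - (x - eps *: al))
          = x + ((2 * tau - 1) * eps) *: al.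
    by apply: quatP; rewrite !(qcD, qcN, qcZ); ring.
  apply: lineU; rewrite normrM (ger0_norm (ltW eps_gt0)) ler_piMl ?(ltW eps_gt0) //.
  by rewrite ler_norml; apply/andP; split; lra.
- move=> t; rewrite ltr_norml => /andP[t_gt t_lt]; exists ((t / eps + 1) / 2).
  + have : -1 < t / eps by rewrite ltr_pdivlMr // mulN1r.
    have : t / eps < 1 by rewrite ltr_pdivrMr // mul1r.
    by move=> *; apply/andP; split; lra.
  + by apply: quatP; rewrite !(qcD, qcN, qcZ); field; rewrite gt_eqF.
Qed.

Lemma qmul_conj_sum_one (R : realType) (c : 'rV[R]_4) :
  3^-1 *: qmul c (qmul (qconj (qofR 1)) (qofR 1) + qmul (qconj (qofR 1)) (qofR 1)
                  + qmul (qofR 1) (qconj (qofR 1))) = c.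
Proof.
have [p0 p1 p2 p3] := qc_qofR (1 : R); have [c0 c1 c2 c3] := qc_qconj (qofR (1 : R)).
by apply: quatP; rewrite qcZ !qc_qmul !qcD !qc_qmul c0 c1 c2 c3 p0 p1 p2 p3; field; rewrite ?pnatr_eq0.
Qed.

Lemma eq_schwarzian_jet (R : realType) (f b : 'rV[R]_4 -> 'rV[R]_4) (c x al : 'rV[R]_4) :
  'D_al f x = qofR 1 -> derivable b x al -> derivable ('D_al f) x al ->
  (\forall y \near x, 'D_al ('D_al f) y = qmul (b y) ('D_al f y)) ->
  'D_al b x - 2^-1 *: qmul (b x) (b x) =
    3^-1 *: qmul c (qmul (qconj ('D_al f x)) ('D_al f x)
                    + qmul (qconj ('D_al f x)) ('D_al f x) + qmul ('D_al f x) (qconj ('D_al f x))) ->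
  c = schwarzian ('D_al ('D_al f) x) ('D_al ('D_al ('D_al f)) x).
Proof.
move=> f_unit db df1 f_ode; rewrite f_unit qmul_conj_sum_one => <-.
have f2 : 'D_al ('D_al f) x = b x by rewrite (nbhs_singleton f_ode) f_unit qmulr1.
rewrite (near_eq_derive al f_ode) derive_qmul // f_unit qmulr1 -f2.
rewrite /schwarzian; move: ('D_al b x) ('D_al ('D_al f) x) => u w.
by apply: quatP; rewrite !(qcD, qcN, qcZ); field; rewrite ?pnatr_eq0.
Qed.

Theorem mainTheorem4 (R : realType) (U : set 'rV[R]_4)
  (f : 'rV[R]_4 -> 'rV[R]_4)
  (B : 'rV[R]_4 -> 'rV[R]_4 -> 'rV[R]_4)
  (C : 'rV[R]_4 -> 'rV[R]_4) :
  open U ->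
  diffeo_onto_open U f ->
  (forall a b : 'rV[R]_4, segment a b `<=` U ->
     line_segment (f @` segment a b) \/ circle_arc (f @` segment a b)) ->
  (* B is a smooth quaternion-valued 1-form on U *)
  (forall x, U x -> forall (c : R) (al be : 'rV[R]_4),
     B x (c *: al + be) = c *: B x al + B x be) ->
  (forall al : 'rV[R]_4, smooth_on U (fun x => B x al)) ->
  (* d_al A_al = B_al A_al, with A_al = d_al f *)
  (forall x, U x -> forall al : 'rV[R]_4,
     'D_al ('D_al f) x = qmul (B x al) ('D_al f x)) ->
  (* defining identity of C *)
  (forall x, U x -> forall al be : 'rV[R]_4,
     'D_al (fun y => B y be) x - 2^-1 *: qmul (B x al) (B x be) =
     3^-1 *: qmul (C x)
       (qmul (qconj ('D_al f x)) ('D_be f x)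
        + qmul (qconj ('D_be f x)) ('D_al f x)
        + qmul ('D_al f x) (qconj ('D_be f x)))) ->
  forall x, U x -> exists r : R, C x = qofR r.
Proof.
move=> U_open f_diffeo f_maps_lines _ B_smooth A_ode C_def x Ux.
have [f_smooth _] := f_diffeo.
have [al f_unit] := exists_unit_direction f_diffeo Ux.
have [eps eps_gt0 [a [b [abU x_ab]]]] := segment_around al U_open Ux.
have f_derivable : on_line x al eps (fun y =>
    [/\ derivable f y al, derivable ('D_al f) y al & derivable ('D_al ('D_al f)) y al]).
  by move=> t /x_ab/abU Uy; split; apply: diff_derivable;
    [exact: f_smooth [::] _ Uy | exact: f_smooth [:: al] _ Uy | exact: f_smooth [:: al; al] _ Uy].
have A_ode_near : \forall y \near x, 'D_al ('D_al f) y = qmul (B y al) ('D_al f y).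
  by apply: filterS (open_nbhs_nbhs (conj U_open Ux)) => y Uy; apply: A_ode.
rewrite (eq_schwarzian_jet f_unit (diff_derivable (B_smooth al [::] _ Ux))
  (diff_derivable (f_smooth [:: al] _ Ux)) A_ode_near (C_def x Ux al al)).
apply: is_real_quat_qofR.
have f_ab : on_line x al eps (fun y => (f @` segment a b) (f y)).
  by move=> t /x_ab ab_t; exists (x + t *: al).
case: (f_maps_lines a b abU) => [[p [q img]] | [c [e1 [e2 [r [t0 [t1 [e11 [e22 [e12 [r_gt0 [_ img]]]]]]]]]]]].
- apply: (line_jet_real eps_gt0 f_derivable f_unit (p := p) (w := q - p)) => t /f_ab.
  by rewrite img => -[tau _ <-]; exists tau.
- apply: (circle_jet_real eps_gt0 f_derivable f_unit e11 e22 e12 r_gt0) => t /f_ab.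
  by rewrite img => -[th _ <-]; exists th.
Qed.
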